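(* Let $(X,d)$ be a metric space, let $k\ge1$, let $p_1,\dots,p_k\in X$, and define $$\mu_P(x,y)=\prod_{i=1}^k\big[d(x,y)+\sqrt{d(x,p_i)d(y,p_i)}\big],\qquad x,y\in X.$$ Then for all $x,y,z\in X$, $$\mu_P(x,y)\leq \Big(\frac{27}{2}\Big)^k\big(\mu_P(x,z)+\mu_P(z,y)\big).$$ Moreover, for all $x,y,z,w\in X$, $$\mu_P(x,y)\mu_P(z,w)\leq 4\Big(\frac{27}{2}\Big)^{2k}\max\{\mu_P(x,z)\mu_P(y,w),\ \mu_P(x,w)\mu_P(y,z)\}.$$ *)

From Stdlib Require Import Reals.
Open Scope R_scope.

Definition is_metric {X : Type} (d : X -> X -> R) : Prop :=
  (forall x y, 0 <= d x y) /\
  (forall x y, d x y = 0 <-> x = y) /\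
  (forall x y, d x y = d y x) /\
  (forall x y z, d x z <= d x y + d y z).

Fixpoint prod_1_to (k : nat) (f : nat -> R) : R :=
  match k with
  | O => 1
  | S k' => prod_1_to k' f * f (S k')
  end.

Definition muP {X : Type} (d : X -> X -> R) (k : nat) (p : nat -> X) (x y : X) : R :=
  prod_1_to k (fun i => d x y + sqrt (d x (p i) * d y (p i))).

(** The whole estimate rests on one comparison, made factor by factor: if
    [d(z,x) <= d(z,y)] then [mu_P(x,y) <= 4^k mu_P(z,y)].  For one factor, with
    [a = d(z,y)], [u = d(z,q)], [v = d(y,q)], [t = d(x,q)], the triangle
    inequality gives [d(x,y) <= 2a] and [max(t,v) <= 2a + min(u,v)], while
    [sqrt(t v) <= max(t,v)] and [min(u,v) <= sqrt(u v)].  Any symmetric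
    nonnegative function with this comparison property satisfies a quasi-triangle
    inequality (compare with the pair farther from [z]) and a Ptolemy-type
    inequality (move both sides towards the cross pair at minimal distance).
    Since [4 <= 27/2], the stated constants follow. *)

From Stdlib Require Import Reals Lra Psatz.
Open Scope R_scope.

Lemma sqrt_mult_le_Rmax a b : 0 <= a -> 0 <= b -> sqrt (a * b) <= Rmax a b.
Proof.
  intros Ha Hb.
  pose proof (Rmax_l a b); pose proof (Rmax_r a b).
  rewrite <- (sqrt_square (Rmax a b)) by lra.
  apply sqrt_le_1_alt; nra.
Qed.

Lemma Rmin_le_sqrt_mult a b : 0 <= a -> 0 <= b -> Rmin a b <= sqrt (a * b).
Proof.
  intros Ha Hb.
  pose proof (Rmin_l a b); pose proof (Rmin_r a b).
  assert (0 <= Rmin a b) by (apply Rmin_glb; lra).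
  rewrite <- (sqrt_square (Rmin a b)) by lra.
  apply sqrt_le_1_alt; nra.
Qed.

Lemma prod_1_to_ge0 k f : (forall i, 0 <= f i) -> 0 <= prod_1_to k f.
Proof.
  intros Hf; induction k as [|k IH]; simpl; [lra|].
  apply Rmult_le_pos; auto.
Qed.

Lemma prod_1_to_ext k f g : (forall i, f i = g i) -> prod_1_to k f = prod_1_to k g.
Proof. intros Hfg; induction k as [|k IH]; simpl; [reflexivity|]. now rewrite IH, Hfg. Qed.

Lemma prod_1_to_le_pow_mult k f g C :
  (forall i, 0 <= f i) -> (forall i, f i <= C * g i) ->
  prod_1_to k f <= C ^ k * prod_1_to k g.
Proof.
  intros Hf Hfg; induction k as [|k IH]; simpl; [lra|].
  replace (C * C ^ k * (prod_1_to k g * g (S k)))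
    with ((C ^ k * prod_1_to k g) * (C * g (S k))) by ring.
  apply Rmult_le_compat; auto using prod_1_to_ge0.
Qed.

Section Comparison.

Variables (X : Type) (d m : X -> X -> R) (C : R).
Hypothesis C_ge0 : 0 <= C.
Hypothesis d_sym : forall x y, d x y = d y x.
Hypothesis m_ge0 : forall x y, 0 <= m x y.
Hypothesis m_sym : forall x y, m x y = m y x.
Hypothesis m_le_via : forall x y z, d z x <= d z y -> m x y <= C * m z y.

Lemma m_le_Rmax x y z : m x y <= C * Rmax (m x z) (m z y).
Proof.
  pose proof (Rmax_l (m x z) (m z y)); pose proof (Rmax_r (m x z) (m z y)).
  destruct (Rle_dec (d z x) (d z y)) as [Hx | Hy].
  - pose proof (m_le_via x y z Hx); nra.
  - assert (Hyx : d z y <= d z x) by lra.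
    pose proof (m_le_via y x z Hyx).
    rewrite (m_sym y x), (m_sym z x) in *; nra.
Qed.

Lemma m_quasi_triangle x y z : m x y <= C * (m x z + m z y).
Proof.
  eapply Rle_trans; [apply (m_le_Rmax x y z)|].
  apply Rmult_le_compat_l; [exact C_ge0|].
  pose proof (m_ge0 x z); pose proof (m_ge0 z y).
  unfold Rmax; destruct (Rle_dec _ _); lra.
Qed.

Lemma m_mult_le_cross x y z w :
  d x z <= d y z -> d x z <= d x w -> m x y * m z w <= C * C * (m x w * m y z).
Proof.
  intros Hy Hw.
  assert (Hxy : m x y <= C * m z y) by (apply m_le_via; rewrite !(d_sym z); exact Hy).
  assert (Hzw : m z w <= C * m x w) by (apply m_le_via; exact Hw).
  rewrite (m_sym y z).
  replace (C * C * (m x w * m z y)) with ((C * m z y) * (C * m x w)) by ring.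
  apply Rmult_le_compat; auto.
Qed.

Lemma m_ptolemy x y z w :
  m x y * m z w <= C * C * Rmax (m x z * m y w) (m x w * m y z).
Proof.
  set (M := Rmax _ _).
  assert (HM1 : m x z * m y w <= M) by apply Rmax_l.
  assert (HM2 : m x w * m y z <= M) by apply Rmax_r.
  assert (HC2 : 0 <= C * C) by nra.
  pose proof (m_mult_le_cross x y z w).
  pose proof (m_mult_le_cross y x z w).
  pose proof (m_mult_le_cross x y w z).
  pose proof (m_mult_le_cross y x w z).
  rewrite (m_sym y x) in *; rewrite (m_sym w z) in *.
  (* A minimal cross distance is minimal in its row and its column. *)
  destruct (Rle_dec (d x z) (d x w)), (Rle_dec (d x z) (d y z)),
    (Rle_dec (d y z) (d y w)), (Rle_dec (d x w) (d y w)); nra.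
Qed.

End Comparison.

Section MuP.

Variables (X : Type) (d : X -> X -> R).
Hypothesis Hd : is_metric d.

Let d_ge0 : forall x y, 0 <= d x y := proj1 Hd.
Let d_sym : forall x y, d x y = d y x := proj1 (proj2 (proj2 Hd)).
Let d_triangle : forall x y z, d x z <= d x y + d y z := proj2 (proj2 (proj2 Hd)).

Lemma muP_factor_le_via x y z q : d z x <= d z y ->
  d x y + sqrt (d x q * d y q) <= 4 * (d z y + sqrt (d z q * d y q)).
Proof.
  intros Hzx.
  pose proof (d_ge0 z y); pose proof (d_ge0 z q); pose proof (d_ge0 y q).
  assert (Hxy : d x y <= 2 * d z y)
    by (pose proof (d_triangle x z y); rewrite (d_sym x z) in *; lra).
  assert (Hmax : Rmax (d x q) (d y q) <= 2 * d z y + Rmin (d z q) (d y q)).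
  { pose proof (d_triangle x z q); pose proof (d_triangle x y q);
      pose proof (d_triangle y z q).
    rewrite (d_sym x z), (d_sym y z) in *.
    apply Rmax_lub; unfold Rmin; destruct (Rle_dec _ _); lra. }
  pose proof (sqrt_mult_le_Rmax (d x q) (d y q) (d_ge0 x q) (d_ge0 y q)).
  pose proof (Rmin_le_sqrt_mult (d z q) (d y q) (d_ge0 z q) (d_ge0 y q)).
  pose proof (sqrt_pos (d z q * d y q)).
  lra.
Qed.

Lemma muP_ge0 k p x y : 0 <= muP d k p x y.
Proof.
  apply prod_1_to_ge0; intro i.
  pose proof (d_ge0 x y); pose proof (sqrt_pos (d x (p i) * d y (p i))); lra.
Qed.

Lemma muP_sym k p x y : muP d k p x y = muP d k p y x.
Proof.
  apply prod_1_to_ext; intro i.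
  now rewrite d_sym, Rmult_comm.
Qed.

Lemma muP_le_via k p x y z : d z x <= d z y -> muP d k p x y <= 4 ^ k * muP d k p z y.
Proof.
  intros Hzx; apply prod_1_to_le_pow_mult.
  - intro i; pose proof (d_ge0 x y); pose proof (sqrt_pos (d x (p i) * d y (p i))); lra.
  - intro i; now apply muP_factor_le_via.
Qed.

End MuP.

Theorem lemma3p5 (X : Type) (d : X -> X -> R) (k : nat) (p : nat -> X) :
  is_metric d -> (1 <= k)%nat ->
  (forall x y z : X,
      muP d k p x y <= (27/2) ^ k * (muP d k p x z + muP d k p z y)) /\
  (forall x y z w : X,
      muP d k p x y * muP d k p z w <=
      4 * (27/2) ^ (2 * k) *
        Rmax (muP d k p x z * muP d k p y w) (muP d k p x w * muP d k p y z)).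
Proof.
  intros Hd _.
  set (C := (27/2) ^ k).
  assert (HC : 0 <= C) by (apply pow_le; lra).
  assert (d_sym : forall x y, d x y = d y x) by apply Hd.
  assert (Hvia : forall x y z, d z x <= d z y -> muP d k p x y <= C * muP d k p z y).
  { intros x y z Hzx.
    eapply Rle_trans; [exact (muP_le_via X d Hd k p x y z Hzx)|].
    apply Rmult_le_compat_r; [apply muP_ge0, Hd|].
    apply pow_incr; lra. }
  pose proof (muP_ge0 X d Hd k p) as Hge0.
  pose proof (muP_sym X d Hd k p) as Hsym.
  split.
  - intros x y z; exact (m_quasi_triangle X d _ C HC Hge0 Hsym Hvia x y z).
  - intros x y z w.
    eapply Rle_trans; [exact (m_ptolemy X d _ C d_sym Hge0 Hsym Hvia x y z w)|].
    replace (2 * k)%nat with (k + k)%nat by lia; rewrite pow_add; fold C.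
    set (M := Rmax _ _).
    assert (HM : 0 <= M).
    { eapply Rle_trans; [|apply Rmax_l]. apply Rmult_le_pos; apply Hge0. }
    assert (0 <= C * C) by nra.
    nra.
Qed.
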